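(* Let $\mathcal{O}$ be the fixed one-counter net described in the context and let the formulas $\varphi_i$ ($i\ge1$) be as defined there. Then for all $n\ge0$ and $i\ge1$: (1) $(t,n)\models\varphi_i$ if and only if $2^i$ divides $n$; (2) $(\bar t,n)\models\varphi_i$ if and only if $2^i$ does not divide $n$.
   Context: A one-counter net is a tuple $(Q,\{Q_p\},\delta_0,\delta_{>0})$ with $\delta_0\subseteq Q\times\{0,1\}\times Q$, $\delta_{>0}\subseteq Q\times\{-1,0,1\}\times Q$ and $\delta_0\subseteq\delta_{>0}$; its transition system has states $Q\times\mathbb{N}$, $(q,n)$ satisfies $p$ iff $q\in Q_p$, and $(q,n)\to(q',n+k)$ iff either $n=0$ and $(q,k,q')\in\delta_0$, or $n>0$ and $(q,k,q')\in\delta_{>0}$. The fixed net $\mathcal{O}$ has control locations $t,\bar t,q_0,q_1,q_2,q_3,f,g,p_0,p_1$; the atomic propositions are the control locations, each holding exactly at itself. $\delta_{>0}$ consists of $(q_0,-1,q_1)$, $(q_1,-1,q_2)$, $(q_2,-1,q_3)$, $(q_3,-1,q_0)$, $(q_1,-1,q_1)$, $(q_3,-1,q_3)$, $(q_0,0,t)$, $(t,0,q_0)$, $(q_2,0,t)$, $(q_1,0,\bar t)$, $(\bar t,0,q_1)$, $(\bar t,0,q_2)$, $(q_3,0,\bar t)$, $(\bar t,0,q_3)$, $(t,0,f)$, $(\bar t,-1,f)$, $(f,-1,g)$, $(g,-1,f)$, $(\bar t,1,p_1)$, $(p_1,1,p_1)$, $(p_1,0,\bar t)$, $(p_0,0,\bar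 t)$, $(\bar t,0,p_0)$; and $\delta_0=\{(\bar t,1,p_1),(p_0,0,\bar t),(\bar t,0,p_0),(t,0,q_0),(t,0,f)\}$. $\mathsf{CTL}$ is interpreted with the standard semantics; $\exists\mathsf{F}\psi$ (written $\mathsf{EF}\psi$) abbreviates $\exists\,\mathtt{true}\,\mathsf{U}\,\psi$, and $\vee$ is defined as usual. Let $\mathrm{test}=t\vee\bar t$, $\varphi_\diamond=q_0\vee q_1\vee q_2\vee q_3$, $\varphi_1=\mathrm{test}\wedge\exists\mathsf{X}\big(f\wedge\mathsf{EF}(f\wedge\neg\exists\mathsf{X}g)\big)$, and for $i>1$: $\mu_i=\exists(\varphi_\diamond\wedge\exists\mathsf{X}\varphi_{i-1})\,\mathsf{U}\,(q_0\wedge\neg\exists\mathsf{X}q_1)$ and $\varphi_i=\mathrm{test}\wedge\exists\mathsf{X}\mu_i$. *)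

From Stdlib Require Import ZArith List.
Import ListNotations.
Open Scope Z_scope.

Inductive loc : Type := t | tbar | q0 | q1 | q2 | q3 | f | g | p0 | p1.

Definition delta_pos : list (loc * Z * loc) :=
  [ (q0,-1,q1); (q1,-1,q2); (q2,-1,q3); (q3,-1,q0); (q1,-1,q1); (q3,-1,q3);
    (q0,0,t); (t,0,q0); (q2,0,t); (q1,0,tbar); (tbar,0,q1); (tbar,0,q2);
    (q3,0,tbar); (tbar,0,q3); (t,0,f); (tbar,-1,f); (f,-1,g); (g,-1,f);
    (tbar,1,p1); (p1,1,p1); (p1,0,tbar); (p0,0,tbar); (tbar,0,p0) ].

Definition delta_zero : list (loc * Z * loc) :=
  [ (tbar,1,p1); (p0,0,tbar); (tbar,0,p0); (t,0,q0); (t,0,f) ].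

Definition config : Type := (loc * nat)%type.

Definition step (c c' : config) : Prop :=
  let (q, n) := c in let (q', m) := c' in
  exists k : Z, Z.of_nat m = Z.of_nat n + k /\
    ((n = 0%nat /\ In (q, k, q') delta_zero) \/
     (0 < n)%nat /\ In (q, k, q') delta_pos).

Inductive ctl : Type :=
| CTrue : ctl
| Atom : loc -> ctl
| Neg : ctl -> ctl
| And : ctl -> ctl -> ctl
| EX : ctl -> ctl
| EU : ctl -> ctl -> ctl.

Definition Or (a b : ctl) : ctl := Neg (And (Neg a) (Neg b)).
Definition EF (a : ctl) : ctl := EU CTrue a.

Inductive eu (P Q : config -> Prop) : config -> Prop :=
| eu_now : forall s, Q s -> eu P Q s
| eu_step : forall s s', P s -> step s s' -> eu P Q s' -> eu P Q s.

Fixpoint sat (phi : ctl) (s : config) : Prop :=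
  match phi with
  | CTrue => True
  | Atom q => fst s = q
  | Neg a => ~ sat a s
  | And a b => sat a s /\ sat b s
  | EX a => exists s', step s s' /\ sat a s'
  | EU a b => eu (sat a) (sat b) s
  end.

Definition test : ctl := Or (Atom t) (Atom tbar).
Definition phi_diamond : ctl :=
  Or (Or (Atom q0) (Atom q1)) (Or (Atom q2) (Atom q3)).

Definition phi_1 : ctl :=
  And test (EX (And (Atom f) (EF (And (Atom f) (Neg (EX (Atom g))))))).

(* phi i for i >= 1 (phi 0 is an unused dummy). *)
Fixpoint phi (i : nat) : ctl :=
  match i with
  | O => CTrue
  | S j =>
    match j with
    | O => phi_1
    | S _ =>
      And test (EX (EU (And phi_diamond (EX (phi j)))
                       (And (Atom q0) (Neg (EX (Atom q1))))))
    end
  end.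

(* In phi_(i+1) the counter can only decrease while cycling q0 -> q1 -> q2 -> q3 -> q0
   (q1 and q3 may also loop), the run must end in (q0, 0), and at each step EX phi_i
   makes the state test its counter m: q0 and q2 demand 2^i | m, q1 and q3 the opposite.
   Reading such a run backwards from (q0, 0) pins down m mod 2^(i+1) from the state
   (q0: 0, q2: 2^i, q1: above 2^i, q3: strictly between 0 and 2^i), so from t the run can
   start in q0 exactly when 2^(i+1) | n, and from tbar in one of q1, q2, q3 exactly when
   it does not.  For i = 1 the f/g loop decides parity. *)
From Stdlib Require Import ZArith List Lia Classical.
Open Scope nat_scope.

Ltac destruct_in H :=
  lazymatch type of H with
  | _ \/ _ => let H' := fresh "Hin" in destruct H as [H'|H]; [destruct_in H' | destruct_in H]
  | False => contradiction
  | _ => idtac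
  end.

(* Splits a hypothesis [step (q, n) (q', m)] with concrete [q] into one case per
   matching transition, substituting [q'] and the counter offset [k]. *)
Ltac inv_step H :=
  let k := fresh "k" in let Hk := fresh "Hk" in
  let Hn := fresh "Hn" in let Hin := fresh "Hin" in
  cbv beta iota delta [step] in H;
  destruct H as [k [Hk [[Hn Hin]|[Hn Hin]]]];
  cbn [In delta_zero delta_pos] in Hin; destruct_in Hin;
  try discriminate;
  try (match goal with Hn : (0 < 0)%nat |- _ => inversion Hn end);
  repeat match goal with E : (_, _, _) = (_, _, _) |- _ => injection E; clear E; intros end;
  repeat match goal with
         | E : _ = ?x |- _ => is_var x; lazymatch type of x with loc => subst x | Z => subst x end
         end.

Ltac in_delta := cbn [In delta_zero delta_pos]; repeat first [left; reflexivity | right].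

Lemma step_dec q q' n : In (q, (-1)%Z, q') delta_pos -> step (q, S n) (q', n).
Proof. intros Hin. exists (-1)%Z. split; [lia | right; split; [lia | exact Hin]]. Qed.

Lemma step_stay q q' n : In (q, 0%Z, q') delta_pos -> step (q, S n) (q', S n).
Proof. intros Hin. exists 0%Z. split; [lia | right; split; [lia | exact Hin]]. Qed.

Lemma step_delta_zero q k q' n m : In (q, k, q') delta_zero ->
  Z.of_nat m = (Z.of_nat n + k)%Z -> step (q, n) (q', m).
Proof.
  intros Hin Hm. exists k. split; [exact Hm|].
  destruct n; [left | right]; split; try lia; try exact Hin.
  cbn [In delta_zero] in Hin; destruct_in Hin;
    match goal with E : _ = (q, k, q') |- _ => rewrite <- E end; in_delta.
Qed.

Lemma eu_unfold (P Q : config -> Prop) s :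
  eu P Q s <-> Q s \/ (P s /\ exists s', step s s' /\ eu P Q s').
Proof.
  split.
  - intros [s' HQ | s' s'' HP Hs HE]; [left | right]; eauto.
  - intros [HQ | [HP [s' [Hs HE]]]]; [apply eu_now | apply eu_step with s']; auto.
Qed.

Lemma sat_Or a b s : sat (Or a b) s <-> sat a s \/ sat b s.
Proof. simpl. destruct (classic (sat a s)); tauto. Qed.

Lemma sat_test q n : sat test (q, n) <-> q = t \/ q = tbar.
Proof. unfold test; rewrite sat_Or; simpl; tauto. Qed.

Lemma sat_diamond q n : sat phi_diamond (q, n) <-> q = q0 \/ q = q1 \/ q = q2 \/ q = q3.
Proof. unfold phi_diamond; rewrite !sat_Or; simpl; tauto. Qed.

(* A decrement from p to p' is enabled exactly when the counter is positive, so
   "p and no successor p'" is a zero test in p. *)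
Lemma sat_zero_test p p' q m :
  In (p, (-1)%Z, p') delta_pos -> (forall k, ~ In (p, k, p') delta_zero) ->
  sat (And (Atom p) (Neg (EX (Atom p')))) (q, m) <-> q = p /\ m = 0.
Proof.
  intros Hdec Hzero. simpl. split.
  - intros [-> Hno]. split; [reflexivity|].
    destruct m as [|m]; [reflexivity|].
    exfalso; apply Hno. exists (p', m). split; [apply step_dec, Hdec | reflexivity].
  - intros [-> ->]. split; [reflexivity|].
    intros [[q' m'] [Hs Hq']]; simpl in Hq'; subst q'.
    destruct Hs as [k [_ [[_ Hin] | [Hn _]]]]; [exact (Hzero k Hin) | lia].
Qed.

Lemma divide_2_Even n : Nat.divide 2 n <-> Nat.Even n.
Proof. split; intros [k Hk]; exists k; lia. Qed.

Lemma not_Even_Odd n : ~ Nat.Even n <-> Nat.Odd n.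
Proof.
  split; [destruct (Nat.Even_or_Odd n); tauto|].
  intros Hodd Heven; exact (Nat.Even_Odd_False n Heven Hodd).
Qed.

Lemma mod_succ_cases b m : 0 < b ->
  (S m mod b = m mod b + 1 /\ m mod b + 1 < b) \/ (S m mod b = 0 /\ m mod b + 1 = b).
Proof.
  intros Hb. pose proof (Nat.div_mod_eq m b). pose proof (Nat.mod_upper_bound m b ltac:(lia)).
  destruct (Nat.eq_dec (m mod b + 1) b) as [E | E].
  - right; split; [|exact E].
    symmetry; apply (Nat.mod_unique _ _ (m / b + 1)); [lia|]. rewrite Nat.mul_add_distr_l. lia.
  - left; split; [|lia]. symmetry; apply (Nat.mod_unique _ _ (m / b)); lia.
Qed.

Lemma divide_double_mod d x : 0 < d ->
  Nat.divide d x <-> x mod (2 * d) = 0 \/ x mod (2 * d) = d.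
Proof.
  intros Hd. rewrite <- Nat.Lcm0.mod_divide, (Nat.mul_comm 2 d), Nat.Div0.mod_mul_r.
  pose proof (Nat.mod_upper_bound x d ltac:(lia)).
  pose proof (Nat.mod_upper_bound (x / d) 2 ltac:(lia)).
  destruct ((x / d) mod 2) as [|[|e]]; lia.
Qed.

Definition halt_f : ctl := And (Atom f) (Neg (EX (Atom g))).

Lemma sat_halt_f q m : sat halt_f (q, m) <-> q = f /\ m = 0.
Proof.
  apply sat_zero_test; [in_delta | intros k Hin; cbn in Hin; destruct_in Hin; discriminate].
Qed.

Lemma sat_EF_halt_f_succ m :
  (sat (EF halt_f) (f, S m) <-> sat (EF halt_f) (g, m)) /\
  (sat (EF halt_f) (g, S m) <-> sat (EF halt_f) (f, m)).
Proof.
  unfold EF; cbn [sat]. split; rewrite eu_unfold, sat_halt_f; split.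
  - intros [[_ ?] | [_ [[q' m'] [Hs Hrun]]]]; [discriminate | inv_step Hs].
    replace m with m' by lia; exact Hrun.
  - intros Hrun; right; split; [exact I|].
    exists (g, m); split; [apply step_dec; in_delta | exact Hrun].
  - intros [[? _] | [_ [[q' m'] [Hs Hrun]]]]; [discriminate | inv_step Hs].
    replace m with m' by lia; exact Hrun.
  - intros Hrun; right; split; [exact I|].
    exists (f, m); split; [apply step_dec; in_delta | exact Hrun].
Qed.

Lemma sat_EF_halt_f m :
  (sat (EF halt_f) (f, m) <-> Nat.Even m) /\ (sat (EF halt_f) (g, m) <-> Nat.Odd m).
Proof.
  induction m as [|m [IHf IHg]].
  - unfold EF; cbn [sat]. split; split; intros H.
    + exists 0; reflexivity.
    + apply eu_now, sat_halt_f; auto.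
    + apply eu_unfold in H as [H | [_ [[q' m'] [Hs _]]]];
        [apply sat_halt_f in H as [? _]; discriminate | inv_step Hs].
    + destruct H as [k Hk]; lia.
  - rewrite (proj1 (sat_EF_halt_f_succ m)), (proj2 (sat_EF_halt_f_succ m)), IHf, IHg,
      Nat.Even_succ, Nat.Odd_succ.
    tauto.
Qed.

Lemma sat_phi_1 n : (sat phi_1 (t, n) <-> Nat.Even n) /\ (sat phi_1 (tbar, n) <-> Nat.Odd n).
Proof.
  unfold phi_1; cbn [sat]. change (And (Atom f) (Neg (EX (Atom g)))) with halt_f.
  split; split.
  - intros [_ [[q' m'] [Hs [Hq HEF]]]]; simpl in Hq; subst q'.
    inv_step Hs; replace n with m' by lia; apply sat_EF_halt_f, HEF.
  - intros Hn. split; [apply sat_test; auto|]. exists (f, n).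
    split; [apply step_delta_zero with 0%Z; [in_delta | lia] | split; [reflexivity|]].
    apply sat_EF_halt_f, Hn.
  - intros [_ [[q' m'] [Hs [Hq HEF]]]]; simpl in Hq; subst q'.
    inv_step Hs. destruct n as [|n]; [lia|]. replace n with m' by lia.
    apply Nat.Odd_succ, sat_EF_halt_f, HEF.
  - intros Hn. destruct n as [|n]; [destruct Hn as [k Hk]; lia|].
    split; [apply sat_test; auto|]. exists (f, n).
    split; [apply step_dec; in_delta | split; [reflexivity|]].
    apply sat_EF_halt_f, Nat.Odd_succ, Hn.
Qed.

Definition halt_q0 : ctl := And (Atom q0) (Neg (EX (Atom q1))).

Lemma sat_halt_q0 q m : sat halt_q0 (q, m) <-> q = q0 /\ m = 0.
Proof.
  apply sat_zero_test; [in_delta | intros k Hin; cbn in Hin; destruct_in Hin; discriminate].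
Qed.

(* The unfolding of [countdown psi] below along the cycle, with the tests by [psi]
   replaced by their meaning, divisibility by [d]. *)
Fixpoint cycle_run (d : nat) (q : loc) (m : nat) : Prop :=
  match m with
  | 0 => q = q0
  | S m' =>
    match q with
    | q0 => Nat.divide d (S m') /\ cycle_run d q1 m'
    | q1 => ~ Nat.divide d (S m') /\ (cycle_run d q2 m' \/ cycle_run d q1 m')
    | q2 => Nat.divide d (S m') /\ cycle_run d q3 m'
    | q3 => ~ Nat.divide d (S m') /\ (cycle_run d q0 m' \/ cycle_run d q3 m')
    | _ => False
    end
  end.

Lemma cycle_run_mod d : 2 <= d -> forall m,
  (cycle_run d q0 m <-> m mod (2 * d) = 0) /\ (cycle_run d q1 m <-> d < m mod (2 * d)) /\
  (cycle_run d q2 m <-> m mod (2 * d) = d) /\ (cycle_run d q3 m <-> 0 < m mod (2 * d) < d).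
Proof.
  intros Hd. induction m as [|m [IH0 [IH1 [IH2 IH3]]]].
  - rewrite Nat.Div0.mod_0_l. cbn [cycle_run]. repeat split; intros; (discriminate || lia).
  - cbn [cycle_run]. rewrite !divide_double_mod, IH0, IH1, IH2, IH3 by lia.
    pose proof (Nat.mod_upper_bound m (2 * d) ltac:(lia)).
    destruct (mod_succ_cases (2 * d) m ltac:(lia)) as [[-> ?] | [-> ?]];
      repeat split; lia.
Qed.

Definition countdown (psi : ctl) : ctl := EU (And phi_diamond (EX psi)) halt_q0.

Definition phi_next (psi : ctl) : ctl := And test (EX (countdown psi)).

Lemma phi_SS j : phi (S (S j)) = phi_next (phi (S j)).
Proof. reflexivity. Qed.

Lemma sat_phi_test j s : sat (phi (S j)) s -> fst s = t \/ fst s = tbar.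
Proof. destruct s as [q n], j; intros [Htest _]; exact (proj1 (sat_test q n) Htest). Qed.

Section Countdown.

Variables (psi : ctl) (d : nat).
Hypothesis psi_t : forall n, sat psi (t, n) <-> Nat.divide d n.
Hypothesis psi_tbar : forall n, sat psi (tbar, n) <-> ~ Nat.divide d n.
Hypothesis psi_test : forall s, sat psi s -> fst s = t \/ fst s = tbar.

Lemma sat_cycle_test q m : sat (And phi_diamond (EX psi)) (q, m) <->
  0 < m /\ ((q = q0 \/ q = q2) /\ Nat.divide d m \/ (q = q1 \/ q = q3) /\ ~ Nat.divide d m).
Proof.
  cbn [sat]. rewrite sat_diamond. split.
  - intros [Hq [[q' m'] [Hs Hpsi]]]. pose proof (psi_test _ Hpsi) as Hq'; simpl in Hq'.
    destruct Hq as [-> | [-> | [-> | ->]]]; inv_step Hs;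
      try (destruct Hq' as [Hq' | Hq']; discriminate);
      replace m' with m in * by lia;
      first [apply psi_t in Hpsi | apply psi_tbar in Hpsi]; auto.
  - intros [Hm [[Hq Hdiv] | [Hq Hdiv]]]; destruct m as [|m]; [lia | | lia |];
      (split; [tauto|]); destruct Hq as [-> | ->];
      first [exists (t, S m); split; [apply step_stay; in_delta | apply psi_t, Hdiv]
            |exists (tbar, S m); split; [apply step_stay; in_delta | apply psi_tbar, Hdiv]].
Qed.

Lemma sat_countdown_unfold s : sat (countdown psi) s <->
  sat halt_q0 s \/
  (sat (And phi_diamond (EX psi)) s /\ exists s', step s s' /\ sat (countdown psi) s').
Proof. exact (eu_unfold _ _ s). Qed.

Lemma sat_countdown_off q m : q <> q0 -> q <> q1 -> q <> q2 -> q <> q3 ->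
  ~ sat (countdown psi) (q, m).
Proof.
  intros ? ? ? ? Hrun. apply sat_countdown_unfold in Hrun as [Hhalt | [Hcycle _]].
  - apply sat_halt_q0 in Hhalt; tauto.
  - apply sat_cycle_test in Hcycle; tauto.
Qed.

Lemma sat_countdown_dec q q' m : In (q, (-1)%Z, q') delta_pos ->
  sat (And phi_diamond (EX psi)) (q, S m) -> sat (countdown psi) (q', m) ->
  sat (countdown psi) (q, S m).
Proof.
  intros Hin Hcycle Hrun.
  apply eu_step with (q', m); [exact Hcycle | apply step_dec, Hin | exact Hrun].
Qed.

Lemma sat_countdown q m : sat (countdown psi) (q, m) <-> cycle_run d q m.
Proof.
  revert q. induction m as [|m IH]; intros q.
  - cbn [cycle_run]. rewrite sat_countdown_unfold, sat_halt_q0, sat_cycle_test.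
    split; [intros [[Hq _] | [[Hm _] _]]; [exact Hq | lia] | intros ->; left; auto].
  - split.
    + rewrite sat_countdown_unfold, sat_halt_q0, sat_cycle_test.
      intros [[_ Hm] | [[_ [[[-> | ->] Hdiv] | [[-> | ->] Hdiv]]] [[q' m'] [Hs Hrun]]]];
        [discriminate | ..]; inv_step Hs;
        try (exfalso; revert Hrun; apply sat_countdown_off; discriminate);
        replace m' with m in * by lia; apply IH in Hrun; cbn [cycle_run]; tauto.
    + destruct q; cbn [cycle_run]; try contradiction; intros [Hdiv Hrun].
      * apply sat_countdown_dec with q1; [in_delta | | apply IH, Hrun].
        apply sat_cycle_test; split; [lia | auto].
      * assert (Htest : sat (And phi_diamond (EX psi)) (q1, S m))
          by (apply sat_cycle_test; split; [lia | auto 6]).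
        destruct Hrun as [Hrun | Hrun];
          [apply sat_countdown_dec with q2 | apply sat_countdown_dec with q1];
          solve [in_delta | exact Htest | apply IH, Hrun].
      * apply sat_countdown_dec with q3; [in_delta | | apply IH, Hrun].
        apply sat_cycle_test; split; [lia | auto 6].
      * assert (Htest : sat (And phi_diamond (EX psi)) (q3, S m))
          by (apply sat_cycle_test; split; [lia | auto 6]).
        destruct Hrun as [Hrun | Hrun];
          [apply sat_countdown_dec with q0 | apply sat_countdown_dec with q3];
          solve [in_delta | exact Htest | apply IH, Hrun].
Qed.

Hypothesis d_ge2 : 2 <= d.

Lemma sat_phi_next n :
  (sat (phi_next psi) (t, n) <-> Nat.divide (2 * d) n) /\
  (sat (phi_next psi) (tbar, n) <-> ~ Nat.divide (2 * d) n).
Proof.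
  rewrite <- Nat.Lcm0.mod_divide. unfold phi_next; cbn [sat]. rewrite !sat_test.
  pose proof (cycle_run_mod d d_ge2 n) as (Hq0 & Hq1 & Hq2 & Hq3).
  pose proof (Nat.mod_upper_bound n (2 * d) ltac:(lia)).
  split; split.
  - intros [_ [[q' m'] [Hs Hc]]]. inv_step Hs;
      try (exfalso; revert Hc; apply sat_countdown_off; discriminate);
      replace m' with n in * by lia; apply Hq0, sat_countdown, Hc.
  - intros Hr. split; [auto|]. exists (q0, n).
    split; [apply step_delta_zero with 0%Z; [in_delta | lia] | apply sat_countdown, Hq0, Hr].
  - intros [_ [[q' m'] [Hs Hc]]]. inv_step Hs;
      try (exfalso; revert Hc; apply sat_countdown_off; discriminate);
      replace m' with n in * by lia; apply sat_countdown in Hc;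
      first [apply Hq1 in Hc | apply Hq2 in Hc | apply Hq3 in Hc]; lia.
  - intros Hr. split; [auto|].
    destruct n as [|n]; [rewrite Nat.Div0.mod_0_l in Hr; lia|].
    destruct (Nat.lt_trichotomy (S n mod (2 * d)) d) as [Hlt | [Heq | Hgt]].
    + exists (q3, S n). split; [apply step_stay; in_delta | apply sat_countdown, Hq3; lia].
    + exists (q2, S n). split; [apply step_stay; in_delta | apply sat_countdown, Hq2; lia].
    + exists (q1, S n). split; [apply step_stay; in_delta | apply sat_countdown, Hq1; lia].
Qed.

End Countdown.

Theorem lemma1 : forall (n i : nat), (1 <= i)%nat ->
  (sat (phi i) (t, n) <-> Nat.divide (2 ^ i) n) /\
  (sat (phi i) (tbar, n) <-> ~ Nat.divide (2 ^ i) n).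
Proof.
  intros n i Hi. destruct i as [|j]; [lia|]. clear Hi. revert n.
  induction j as [|j IH]; intros n.
  - rewrite (proj1 (sat_phi_1 n)), (proj2 (sat_phi_1 n)).
    change (2 ^ 1) with 2. rewrite divide_2_Even, <- not_Even_Odd. tauto.
  - rewrite phi_SS, Nat.pow_succ_r'. apply sat_phi_next.
    + intros m; apply IH.
    + intros m; apply IH.
    + apply sat_phi_test.
    + rewrite Nat.pow_succ_r'. pose proof (Nat.pow_nonzero 2 j ltac:(discriminate)). lia.
Qed.
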